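(* Let $A=kQ/I$ be a triangular quadratic string algebra and let $n\ge 2$. (a) For every $f\in\mathcal{B}^n_-$, one has $f-f_+\in{\rm Im}\,\delta^{n-1}$. (b) For every $g\in\mathcal{B}^n_+$, one has $g-g_-\in{\rm Im}\,\delta^{n-1}$.
   Context: $k$ is a field, $Q$ a finite quiver without oriented cycles, $I$ an admissible ideal of $kQ$ generated by paths of length 2, $A=kQ/I$; paths are composed left to right, $\overline{x}$ denotes the class of $x$ modulo $I$. String algebra: (S1) $I$ generated by paths; (S2) each vertex is the source of at most two arrows and the target of at most two arrows; (S3) for each arrow $\alpha$ there is at most one arrow $\beta$ with $\alpha\beta\notin I$ and at most one arrow $\gamma$ with $\gamma\alpha\notin I$. For an arrow $\alpha$, $\langle\alpha\rangle$ is the two-sided ideal of $kQ$ generated by $\alpha$ (a path lies in it iff $\alpha$ occurs in it). Let $E$ be the subalgebra of $A$ spanned by the vertex idempotents. Set $\Gamma_0=Q_0$, $\Gamma_1=Q_1$, and for $n\ge2$, $\Gamma_n=\{\alpha_1\cdots\alpha_n : \alpha_i \text{ arrows}, \alpha_i\alpha_{i+1}\in I \text{ for } 1\le i<n\}$; $k\Gamma_n$ is the $E$-$E$-bimodule they span. Let $\mathcal{C}^n=\mathrm{Hom}_{E\text{-}E}(k\Gamma_n,A)$, with differential $\delta^n:\mathcal{C}^n\to\mathcal{C}^{n+1}$, $(\delta^n\phi)(\alpha_1\cdots\alpha_{n+1})=\overline{\alpha_1}\,\phi(\alpha_2\cdots\alpha_{n+1})+(-1)^{n+1}\phi(\alpha_1\cdots\alpha_n)\,\overline{\alpha_{n+1}}$.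 A basis of $\mathcal{C}^n$ consists of the pairs $(\alpha_1\cdots\alpha_n,\overline{p})$ with $\alpha_1\cdots\alpha_n\in\Gamma_n$ and $p\notin I$ a path from $s(\alpha_1)$ to $t(\alpha_n)$; this pair denotes the map sending $\alpha_1\cdots\alpha_n$ to $\overline p$ and all other elements of $\Gamma_n$ to $0$. $\mathcal{B}^n_-$ is the set of basis elements of the form $(\alpha_1\cdots\alpha_n,\overline{\alpha_1p})$; $\mathcal{B}^n_0$ those $(\alpha_1\cdots\alpha_n,\overline w)$ with $w\notin\langle\alpha_1\rangle$, $w\notin\langle\alpha_n\rangle$; $\mathcal{B}^n_+$ those $(\alpha_1\cdots\alpha_n,\overline{q\alpha_n})$ with $q\notin\langle\alpha_1\rangle$. For $f=(\alpha_1\cdots\alpha_n,\overline{\alpha_1p})\in\mathcal{B}^n_-$, define $f_+\in\mathcal{C}^n$ by $f_+(\alpha_2\cdots\alpha_{n+1})=(-1)^{n+1}\overline{p\alpha_{n+1}}$ for every arrow $\alpha_{n+1}$ with $\alpha_2\cdots\alpha_{n+1}\in\Gamma_n$, and $f_+=0$ on all other elements of $\Gamma_n$. For $g=(\alpha_1\cdots\alpha_n,\overline{q\alpha_n})\in\mathcal{B}^n_+$, define $g_-\in\mathcal{C}^n$ by $g_-(\alpha_0\alpha_1\cdots\alpha_{n-1})=(-1)^{n+1}\overline{\alpha_0q}$ for every arrow $\alpha_0$ with $\alpha_0\alpha_1\cdots\alpha_{n-1}\in\Gamma_n$, and $g_-=0$ on all other elements of $\Gamma_n$. *)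

From mathcomp Require Import all_boot all_order all_algebra.
Set Implicit Arguments. Unset Strict Implicit. Unset Printing Implicit Defensive.
Import GRing.Theory.
Local Open Scope ring_scope.

(* Quiver Q: vertices V, arrows Ar, source/target maps src/tgt.
   rel a b = true means "the length-2 path ab lies in I"; I is the ideal of kQ
   generated by the composable such paths (quadratic monomial ideal).
   A path is a pair (start vertex, list of arrows, composed left to right). *)

Definition apath (V Ar : finType) := (V * seq Ar)%type.

Section Defs.
Context {V Ar : finType} (src tgt : Ar -> V) (rel : rel Ar).

Fixpoint comp_from (v : V) (s : seq Ar) : bool :=
  if s is a :: s' then (src a == v) && comp_from (tgt a) s' else true.

Definition psrc (p : apath V Ar) : V := p.1.
Definition ptgt (p : apath V Ar) : V := last p.1 [seq tgt a | a <- p.2].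

(* p is a path of Q not lying in I (i.e. its class is a basis vector of A) *)
Definition nzpath (p : apath V Ar) : bool :=
  comp_from p.1 p.2 && sorted (fun a b => ~~ rel a b) p.2.

Definition triangular : Prop :=
  forall (v : V) (s : seq Ar), s != [::] -> comp_from v s -> ptgt (v, s) != v.

(* (S2) and (S3); (S1) holds by construction *)
Definition string_alg : Prop :=
  (forall v : V, #|[pred a | src a == v]| <= 2 /\ #|[pred a | tgt a == v]| <= 2)%N /\
  (forall a : Ar,
     #|[pred b | (tgt a == src b) && ~~ rel a b]| <= 1 /\
     #|[pred c | (tgt c == src a) && ~~ rel c a]| <= 1)%N.

Definition gamma (n : nat) (g : seq Ar) : bool :=
  [&& size g == n, sorted (fun a b => tgt a == src b) g & sorted rel g].

Section Alg.
Variable k : fieldType.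

(* elements of A = kQ/I, given by their coordinates on the basis of classes
   of paths not in I *)
Definition alg := apath V Ar -> k.

Definition cls (p : apath V Ar) : alg :=
  fun q => if nzpath p && (q == p) then 1 else 0.

Definition lmul (a : Ar) (x : alg) : alg :=
  fun q => if q.2 is b :: s then
             if [&& b == a, q.1 == src a & nzpath q] then x (tgt a, s) else 0
           else 0.

Definition rmul (x : alg) (a : Ar) : alg :=
  fun q => if rev q.2 is b :: s then
             if (b == a) && nzpath q then x (q.1, rev s) else 0
           else 0.

Definition cochain := seq Ar -> alg.

(* phi belongs to C^n = Hom_{E-E}(k Gamma_n, A) (n >= 1) *)
Definition is_cochain (n : nat) (phi : cochain) : Prop :=
  forall (a : Ar) (g : seq Ar), gamma n (a :: g) ->
  forall q : apath V Ar, phi (a :: g) q != 0 ->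
    [&& nzpath q, psrc q == src a & ptgt q == tgt (last a g)].

Definition delta (m : nat) (phi : cochain) : cochain :=
  fun g q => if g is a :: g' then
      lmul a (phi g') q + (-1) ^+ m.+1 * rmul (phi (belast a g')) (last a g') q
    else 0.

Definition in_image (n : nat) (h : cochain) : Prop :=
  exists phi : cochain, is_cochain n.-1 phi /\
    forall g : seq Ar, gamma n g -> forall q : apath V Ar, delta n.-1 phi g q = h g q.

(* B^n_- : f = (a1 a2...an, \overline{a1 p}) with p = (tgt a1, ps) *)
Definition in_Bminus (n : nat) (a1 : Ar) (g' ps : seq Ar) : bool :=
  [&& gamma n (a1 :: g'), nzpath (src a1, a1 :: ps) &
      ptgt (src a1, a1 :: ps) == tgt (last a1 g')].

Definition fBm (n : nat) (a1 : Ar) (g' ps : seq Ar) : cochain :=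
  fun g0 => if gamma n g0 && (g0 == a1 :: g') then cls (src a1, a1 :: ps)
            else fun _ => 0.

(* f_+ : a2...an a_(n+1) |-> (-1)^(n+1) \overline{p a_(n+1)} *)
Definition fplus (n : nat) (a1 : Ar) (g' ps : seq Ar) : cochain :=
  fun g0 q => if gamma n g0 && (g0 == rcons g' (last a1 g0))
              then (-1) ^+ n.+1 * cls (tgt a1, rcons ps (last a1 g0)) q else 0.

(* B^n_+ : g = (a1...a_(n-1) an, \overline{q an}) with q = (src a1, qs),
   a1 not occurring in q *)
Definition in_Bplus (n : nat) (a1 : Ar) (g'' : seq Ar) (an : Ar) (qs : seq Ar)
  : bool :=
  [&& gamma n (a1 :: rcons g'' an), nzpath (src a1, rcons qs an) &
      a1 \notin qs].

Definition gBp (n : nat) (a1 : Ar) (g'' : seq Ar) (an : Ar) (qs : seq Ar)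
  : cochain :=
  fun g0 => if gamma n g0 && (g0 == a1 :: rcons g'' an)
            then cls (src a1, rcons qs an) else fun _ => 0.

(* g_- : a0 a1 ... a_(n-1) |-> (-1)^(n+1) \overline{a0 q} *)
Definition gminus (n : nat) (a1 : Ar) (g'' : seq Ar) (qs : seq Ar) : cochain :=
  fun g0 q => if g0 is a0 :: rest then
                if gamma n g0 && (rest == a1 :: g'')
                then (-1) ^+ n.+1 * cls (src a0, a0 :: qs) q else 0
              else 0.

Definition csub (f h : cochain) : cochain := fun g q => f g q - h g q.

End Alg.
End Defs.

From mathcomp Require Import all_boot all_order all_algebra.
Set Implicit Arguments. Unset Strict Implicit. Unset Printing Implicit Defensive.
Import GRing.Theory.
Local Open Scope ring_scope.

(* For f = (a1 a2...an, a1 p) the cochain phi = (a2...an, p) of degree n-1 has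
   delta phi = f - f_+: the term a p of delta phi survives only for a = a1,
   because a1 is the only arrow composing with the first arrow of p outside I,
   and the other term is exactly -f_+.  Dually, for g = (a1...an, q an) the
   cochain (-1)^n (a1...a(n-1), q) has coboundary g - g_-.  Absence of oriented
   cycles makes p and q nonempty and keeps the two terms of delta phi apart. *)

Section Quiver.
Variables (V Ar : finType) (src tgt : Ar -> V) (rel : rel Ar).
Local Notation comp_from := (comp_from src tgt).
Local Notation nzpath := (nzpath src tgt rel).

Lemma comp_from_rcons v s a :
  comp_from v (rcons s a) = comp_from v s && (src a == last v [seq tgt b | b <- s]).
Proof. by elim: s v => [|b s IHs] v /=; rewrite ?andbT // IHs andbA. Qed.

Lemma comp_from_path a s :
  path (fun a b => tgt a == src b) a s -> comp_from (tgt a) s.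
Proof. by elim: s a => [|b s IHs] a //= /andP[/eqP -> /IHs ->]; rewrite eqxx. Qed.

Lemma nzpath_behead v a s : nzpath (v, a :: s) -> nzpath (tgt a, s).
Proof. by rewrite /nzpath /= => /andP[/andP[_ ->] /path_sorted]. Qed.

Lemma nzpath_belast v s a : nzpath (v, rcons s a) -> nzpath (v, s).
Proof.
rewrite /nzpath /= comp_from_rcons => /andP[/andP[-> _]].
by case: s => //= b s; rewrite rcons_path => /andP[].
Qed.

Lemma nzpath_head2 v b c s :
  nzpath (v, b :: c :: s) -> (tgt b == src c) && ~~ rel b c.
Proof.
by rewrite /nzpath /= => /andP[/andP[_ /andP[Ecb _]] /andP[-> _]]; rewrite eq_sym Ecb.
Qed.

Lemma nzpath_last2 v c s a :
  nzpath (v, rcons (c :: s) a) -> (tgt (last c s) == src a) && ~~ rel (last c s) a.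
Proof.
rewrite /nzpath /= comp_from_rcons rcons_path => /andP[/andP[_ /andP[_ Ea]] /andP[_ ->]].
by rewrite eq_sym -last_map Ea.
Qed.

Section Cochains.
Variable k : fieldType.
Local Notation alg := (@alg V Ar k).
Local Notation cochain := (@cochain V Ar k).
Local Notation cls := (cls src tgt rel k).
Local Notation lmul := (lmul src tgt rel (k:=k)).
Local Notation rmul := (rmul src tgt rel (k:=k)).
Local Notation delta := (delta src tgt rel (k:=k)).

Lemma cls_neq0 p q : cls p q != 0 -> nzpath p /\ q = p.
Proof. by rewrite /cls; case: ifP => [/andP[-> /eqP]|]; rewrite ?eqxx. Qed.

Lemma lmul0 a q : lmul a (fun=> 0) q = 0.
Proof. by case: q => w [|b t]; rewrite /lmul //=; case: ifP. Qed.

Lemma rmul0 a q : rmul (fun=> 0) a q = 0.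
Proof. by case: q => w t; rewrite /rmul /=; case: (rev t) => // b s; case: ifP. Qed.

Lemma lmulZ a c x q : lmul a (fun q => c * x q) q = c * lmul a x q.
Proof. by case: q => w [|b t]; rewrite /lmul ?mulr0 //=; case: ifP; rewrite ?mulr0. Qed.

Lemma rmulZ a c x q : rmul (fun q => c * x q) a q = c * rmul x a q.
Proof.
by case: q => w t; rewrite /rmul /=; case: (rev t) => [|b s]; rewrite ?mulr0 //;
  case: ifP; rewrite ?mulr0.
Qed.

Lemma lmul_cls a v s q :
  lmul a (cls (v, s)) q = if tgt a == v then cls (src a, a :: s) q else 0.
Proof.
case: q => w [|b t]; rewrite /lmul /cls /= ?xpair_eqE ?andbF ?if_same //.
rewrite eqseq_cons; have [->|nba] := eqVneq b a; last by rewrite /= ?andbF ?andFb /= !if_same.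
have [->|nw] := eqVneq w (src a); last by rewrite /= ?andbF ?andFb /= !if_same.
have [->|nts] := eqVneq t s; last by rewrite /= ?andbF ?andFb /= !if_same.
rewrite /= !andbT; have [<-|] := eqVneq (tgt a) v; last by rewrite andbF /= !if_same.
by case nz_as: (nzpath _); rewrite ?(nzpath_behead nz_as).
Qed.

Lemma rmul_cls v s a q : rmul (cls (v, s)) a q = cls (v, rcons s a) q.
Proof.
case: q => w t; rewrite /rmul /cls /=.
case: (lastP t) => [|t' b]; first by case: s => [|? ?]; rewrite xpair_eqE /= ?andbF.
rewrite rev_rcons /= revK !xpair_eqE eqseq_rcons.
have [->|] := eqVneq b a; last by rewrite /= ?andbF ?andFb /= ?if_same.
have [->|] := eqVneq w v; last by rewrite /= ?andbF ?andFb /= ?if_same.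
have [->|] := eqVneq t' s; last by rewrite /= ?andbF ?andFb /= ?if_same.
by rewrite !andbT; case nz_sa: (nzpath _); rewrite ?(nzpath_belast nz_sa).
Qed.

Definition single (h : seq Ar) (x : alg) : cochain :=
  fun g => if g == h then x else fun=> 0.

Lemma single_is_cochain m a g (x : alg) :
  (forall q, x q != 0 -> [&& nzpath q, psrc q == src a & ptgt tgt q == tgt (last a g)]) ->
  is_cochain src tgt rel m (single (a :: g) x).
Proof.
move=> x_supp b h _ q; rewrite /single.
by case: (b :: h =P a :: g) => [[-> ->] /x_supp|_]; rewrite ?eqxx.
Qed.

Lemma delta_single m h x b g q :
  delta m (single h x) (b :: g) q =
  (if g == h then lmul b x q else 0) +
  (-1) ^+ m.+1 * (if belast b g == h then rmul x (last b g) q else 0).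
Proof. by rewrite /delta /single; case: eqP; case: eqP; rewrite ?lmul0 ?rmul0. Qed.

Hypothesis triQ : triangular src tgt.

Lemma triangular_tgt_last_neq_src a s :
  path (fun a b => tgt a == src b) a s -> tgt (last a s) != src a.
Proof.
move=> comp_as; have := triQ (v := src a) (s := a :: s) isT.
by rewrite /= eqxx comp_from_path // /ptgt /= last_map => /(_ isT).
Qed.

Lemma belast_neq_behead b a r : tgt b = src a -> belast b (a :: r) != a :: r.
Proof.
move=> Eba; rewrite /= eqseq_cons negb_and; apply/orP; left.
apply: contraNneq (triangular_tgt_last_neq_src (a := a) (s := [::]) isT) => Eb.
by rewrite /= -{1}Eb Eba.
Qed.

Hypothesis strA : string_alg src tgt rel.

Lemma string_pred_unique b b' c :
  (tgt b == src c) && ~~ rel b c -> (tgt b' == src c) && ~~ rel b' c -> b = b'.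
Proof. by move=> bc b'c; apply: (card_le1_eqP (strA.2 c).2). Qed.

Lemma string_succ_unique a b b' :
  (tgt a == src b) && ~~ rel a b -> (tgt a == src b') && ~~ rel a b' -> b = b'.
Proof. by move=> ab ab'; apply: (card_le1_eqP (strA.2 a).1). Qed.

Lemma fBm_sub_fplus_in_image n a1 g' ps : (2 <= n)%N ->
  in_Bminus src tgt rel n a1 g' ps ->
  in_image src tgt rel n
    (csub (fBm src tgt rel k n a1 g' ps) (fplus src tgt rel k n a1 g' ps)).
Proof.
move=> n_ge2 /and3P[gam_f nz_a1p tgt_p].
case: g' gam_f tgt_p => [|a2 r] gam_f tgt_p; first by move: gam_f n_ge2 => /and3P[/eqP <-].
have /and3P[_ /= /andP[/eqP Ea2 comp_r] _] := gam_f.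
case: ps nz_a1p tgt_p => [|c p] nz_a1p tgt_p.
  by move: tgt_p; rewrite /ptgt /= Ea2 eq_sym (negbTE (triangular_tgt_last_neq_src comp_r)).
exists (single (a2 :: r) (cls (tgt a1, c :: p))); split.
  apply: single_is_cochain => q /cls_neq0[nz_p ->].
  by rewrite nz_p /psrc /= Ea2 eqxx; move: tgt_p; rewrite /ptgt.
move=> [|b g] gam_g q; first by move: gam_g n_ge2 => /and3P[/eqP <-].
rewrite delta_single prednK ?(leq_trans _ n_ge2) // /csub /fBm /fplus gam_g /=.
have -> : (b :: g == rcons (a2 :: r) (last b g)) = (belast b g == a2 :: r).
  by rewrite {1}(lastI b g) eqseq_rcons eqxx andbT.
rewrite eqseq_cons; have [Eg | g_neq] := eqVneq g (a2 :: r); last first.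
  rewrite andbF add0r sub0r; case: ifP => _; last by rewrite mulr0 oppr0.
  by rewrite rmul_cls exprS mulN1r mulNr opprK.
move: gam_g; rewrite Eg => /and3P[_ /= /andP[/eqP Eb _] _].
rewrite (negbTE (belast_neq_behead r Eb)) andbT mulr0 addr0 subr0 lmul_cls.
have [-> | b_neq] := eqVneq b a1; first by rewrite eqxx.
case: eqP => // _; set x := cls _ q.
have [// | /cls_neq0[/nzpath_head2 bc _]] := eqVneq x 0.
by case/eqP: b_neq; apply: string_pred_unique bc (nzpath_head2 nz_a1p).
Qed.

Lemma gBp_sub_gminus_in_image n a1 g'' an qs : (2 <= n)%N ->
  in_Bplus src tgt rel n a1 g'' an qs ->
  in_image src tgt rel n
    (csub (gBp src tgt rel k n a1 g'' an qs) (gminus src tgt rel k n a1 g'' qs)).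
Proof.
move=> n_ge2 /and3P[gam_g nz_qan _].
have /and3P[_ /= comp_g _] := gam_g.
move: comp_g; rewrite rcons_path => /andP[comp_g'' /eqP Ean].
case: qs nz_qan => [|c q] nz_qan.
  move: nz_qan; rewrite /nzpath /= !andbT => /eqP Esrc.
  by have := triangular_tgt_last_neq_src comp_g''; rewrite Ean Esrc eqxx.
have /andP[/eqP Elast _] := nzpath_last2 nz_qan.
exists (single (a1 :: g'') (fun q' => (-1) ^+ n * cls (src a1, c :: q) q')); split.
  apply: single_is_cochain => q'; rewrite mulf_eq0 negb_or => /andP[_ /cls_neq0[nz_q ->]].
  by rewrite nz_q /psrc /ptgt /= eqxx last_map Elast Ean eqxx.
move=> [|b g] gam_bg q'; first by move: gam_bg n_ge2 => /and3P[/eqP <-].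
rewrite delta_single prednK ?(leq_trans _ n_ge2) // /csub /gBp /gminus gam_bg /=.
have -> : (b :: g == a1 :: rcons g'' an) = (belast b g == a1 :: g'') && (last b g == an).
  by rewrite {1}(lastI b g) -rcons_cons eqseq_rcons.
have [Eg | g_neq] := eqVneq g (a1 :: g''); last first.
  rewrite /= add0r subr0; case: (belast b g =P a1 :: g'') => _ /=; last by rewrite mulr0.
  rewrite rmulZ rmul_cls mulrA -exprMn mulrNN mulr1 expr1n mul1r.
  have [-> // | last_neq] := eqVneq (last b g) an.
  set x := cls _ q'; have [// | /cls_neq0[/nzpath_last2 last_b _]] := eqVneq x 0.
  by case/eqP: last_neq; apply: string_succ_unique last_b (nzpath_last2 nz_qan).
move: gam_bg; rewrite Eg => /and3P[_ /= /andP[/eqP Eb _] _].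
rewrite (negbTE (belast_neq_behead g'' Eb)) /= mulr0 addr0 sub0r lmulZ lmul_cls Eb eqxx.
by rewrite exprS mulN1r mulNr opprK.
Qed.

End Cochains.
End Quiver.

Theorem lemma2p1 (k : fieldType) (V Ar : finType) (src tgt : Ar -> V)
    (rel : rel Ar) (n : nat) :
  triangular src tgt -> string_alg src tgt rel -> (2 <= n)%N ->
  (forall (a1 : Ar) (g' ps : seq Ar),
     in_Bminus src tgt rel n a1 g' ps ->
     in_image src tgt rel n
       (csub (fBm src tgt rel k n a1 g' ps) (fplus src tgt rel k n a1 g' ps)))
  /\
  (forall (a1 : Ar) (g'' : seq Ar) (an : Ar) (qs : seq Ar),
     in_Bplus src tgt rel n a1 g'' an qs ->
     in_image src tgt rel n
       (csub (gBp src tgt rel k n a1 g'' an qs) (gminus src tgt rel k n a1 g'' qs))).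
Proof.
move=> triQ strA n_ge2; split=> *.
- exact: fBm_sub_fplus_in_image.
- exact: gBp_sub_gminus_in_image.
Qed.
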